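(* Let $L_1,\dots,L_m$ be signed Laplacians of signed digraphs on $\{1,\dots,n\}$, each weight balanced with $-L_k$ EEP, and let $Q\in\mathbb{R}^{(n-1)\times n}$ satisfy $QQ^\top=I_{n-1}$, $Q\mathbf{1}=0$. Fix an integer $r\ge1$ and set $\hat L_k=L_k\oplus\cdots\oplus L_k$ ($r$-fold Kronecker sum) and $\hat Q=Q\otimes\cdots\otimes Q$ ($r$-fold Kronecker product). If there exists a symmetric positive definite $\hat P\in\mathbb{R}^{n^r\times n^r}$ such that \[ -\hat Q\hat L_k\hat P\hat Q^\top-\hat Q\hat P\hat L_k^\top\hat Q^\top\prec0\quad\text{for all }k=1,\dots,m, \] then $\{L_1,\dots,L_m\}$ is a consensus set for the switched system $\dot{\mathbf{x}}=-L_{\sigma(t)}\mathbf{x}$.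
   Context: For a signed digraph with real weighted adjacency matrix $A$ (entries of any sign), the signed Laplacian is $L=\Sigma-A$, $\Sigma=\mathrm{diag}(\sigma_i)$, $\sigma_i=\sum_jA_{ij}$, so $L\mathbf{1}=0$; weight balanced means $L^\top\mathbf{1}=0$. $M$ is EEP if there is $t_0\ge0$ with $e^{Mt}$ entrywise positive for all real $t\ge t_0$. The Kronecker sum is $A\oplus B=A\otimes I+I\otimes B$, and the $r$-fold version is defined iteratively. $X\prec0$ means symmetric negative definite. A switching signal is a piecewise constant map $\sigma:[0,\infty)\to\{1,\dots,m\}$ with finitely many discontinuities on every bounded interval; a consensus set is one for which, for every switching signal and every $\mathbf{x}(0)$, $\mathbf{x}(t)\to\alpha\mathbf{1}$ for some $\alpha\in\mathbb{R}$. *)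

From HB Require Import structures.
From mathcomp Require Import all_boot all_order all_algebra.
From mathcomp Require Import all_classical all_reals all_analysis.
From mathcomp Require Import mxtens.
Set Implicit Arguments. Unset Strict Implicit. Unset Printing Implicit Defensive.
Import Order.TTheory GRing.Theory Num.Theory.
Import numFieldNormedType.Exports.
Local Open Scope ring_scope.
Local Open Scope classical_set_scope.

Section Defs.
Variable R : realType.

Definition ones (n : nat) : 'cV[R]_n := const_mx 1.

Definition signed_laplacian (n : nat) (A : 'M[R]_n) : 'M[R]_n :=
  diag_mx (\row_i (\sum_j A i j)) - A.

Definition weight_balanced (n : nat) (L : 'M[R]_n) : Prop :=
  L^T *m ones n = 0.

Definition expmx (n : nat) (M : 'M[R]_n) : 'M[R]_n :=
  \matrix_(i, j) limn (fun N : nat => \sum_(k < N) (M ^+ k) i j / (k`!)%:R).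

Definition EEP (n : nat) (M : 'M[R]_n) : Prop :=
  exists t0 : R, 0 <= t0 /\
    forall t : R, t0 <= t -> forall i j, 0 < expmx (t *: M) i j.

Fixpoint kron_pow (p q : nat) (Q : 'M[R]_(p, q)) (r : nat)
  : 'M[R]_(p ^ r, q ^ r) :=
  match r return 'M[R]_(p ^ r, q ^ r) with
  | 0 => (1%:M : 'M[R]_1)
  | r'.+1 => castmx (esym (expnS p r'), esym (expnS q r')) (Q *t kron_pow Q r')
  end.

(* r-fold Kronecker sum  L (+) ... (+) L,  A (+) B = A (x) I + I (x) B
   (0-fold sum is the 1x1 zero matrix, so the 1-fold sum is L) *)
Fixpoint kron_sum (n : nat) (L : 'M[R]_n) (r : nat) : 'M[R]_(n ^ r) :=
  match r return 'M[R]_(n ^ r) with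
  | 0 => (0 : 'M[R]_1)
  | r'.+1 => castmx (esym (expnS n r'), esym (expnS n r'))
      (L *t (1%:M : 'M[R]_(n ^ r')) + (1%:M : 'M[R]_n) *t kron_sum L r')
  end.

Definition posdef (n : nat) (P : 'M[R]_n) : Prop :=
  P^T = P /\ forall v : 'cV[R]_n, v != 0 -> 0 < (v^T *m P *m v) ord0 ord0.
Definition negdef (n : nat) (X : 'M[R]_n) : Prop :=
  X^T = X /\ forall v : 'cV[R]_n, v != 0 -> (v^T *m X *m v) ord0 ord0 < 0.

(* switching signal: piecewise constant on [0,oo) with finitely many
   discontinuities on every bounded interval *)
Definition locally_const_at (m : nat) (sigma : R -> 'I_m) (t : R) : Prop :=
  exists e : R, 0 < e /\ forall u : R, `|u - t| < e -> sigma u = sigma t.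

Definition switching_signal (m : nat) (sigma : R -> 'I_m) : Prop :=
  forall T : R, exists s : seq R,
    forall t : R, 0 <= t <= T -> t \notin s -> locally_const_at sigma t.

(* x is a solution on [0,oo) of x' = - L_{sigma t} x: continuous, and
   differentiable with the prescribed derivative at every t > 0 that is
   not a switching instant of sigma *)
Definition switched_solution (n m : nat) (L : 'I_m -> 'M[R]_n)
  (sigma : R -> 'I_m) (x : R -> 'cV[R]_n) : Prop :=
  (forall i : 'I_n, continuous (fun t : R => x t i ord0)) /\
  forall t : R, 0 < t -> locally_const_at sigma t ->
    forall i : 'I_n, is_derive t 1 (fun u : R => x u i ord0) ((- L (sigma t) *m x t) i ord0).

Definition consensus_set (n m : nat) (L : 'I_m -> 'M[R]_n) : Prop :=
  forall sigma : R -> 'I_m, switching_signal sigma ->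
  forall x : R -> 'cV[R]_n, switched_solution L sigma x ->
  exists alpha : R, forall i : 'I_n,
    (fun t : R => x t i ord0) @ +oo --> (alpha *: ones n) i ord0.

End Defs.

(* Since [L_k 1 = 0], [Q L_k = (Q L_k Q^T) Q], so the Kronecker power [Qh] of [Q]
   intertwines the Kronecker sums of [L_k] and of the reduced Laplacian, and
   [y = Qh x^(x)r] solves the switched system driven by the reduced Kronecker
   sums. The LMI makes [y^T (Qh P Qh^T)^-1 y] a common Lyapunov function, so
   [y -> 0]. The entries of [y] include the powers [(Q x)_j ^ r], hence
   [Q x -> 0]. Weight balance keeps [1^T x] constant, and
   [x = Q^T Q x + (1^T x / n) 1], so [x] converges to the average of [x 0]. *)

From HB Require Import structures.
From mathcomp Require Import all_boot all_order all_algebra.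
From mathcomp Require Import all_classical all_reals all_analysis.
From mathcomp Require Import mxtens.
From mathcomp.algebra_tactics Require Import ring lra.
Import Order.TTheory GRing.Theory Num.Theory.
Import numFieldNormedType.Exports.
Local Open Scope ring_scope.
Set Implicit Arguments. Unset Strict Implicit. Unset Printing Implicit Defensive.

Section CastTensor.
Variable R : pzRingType.

Lemma castmx_mulmx m m' n n' p p' (e1 : m = m') (e2 : n = n') (e3 : p = p')
    (A : 'M[R]_(m, n)) (B : 'M[R]_(n, p)) :
  castmx (e1, e2) A *m castmx (e2, e3) B = castmx (e1, e3) (A *m B).
Proof. by case: m' / e1; case: n' / e2; case: p' / e3; rewrite !castmx_id. Qed.

Lemma castmx1 m m' (e : m = m') : castmx (e, e) (1%:M : 'M[R]_m) = 1%:M.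
Proof. by case: m' / e; rewrite castmx_id. Qed.

Lemma tensmx11 m n : (1%:M : 'M[R]_m) *t (1%:M : 'M[R]_n) = 1%:M.
Proof.
apply/matrixP=> i j.
case: (mxtens_indexP i) => i0 i1; case: (mxtens_indexP j) => j0 j1.
rewrite tensmxE !mxE (inj_eq (can_inj (@mxtens_indexK _ _))) xpair_eqE.
by case: eqP; case: eqP; rewrite /= ?mulr1 ?mulr0 ?mul0r.
Qed.

End CastTensor.

Section KroneckerPowers.
Variable R : realType.

Lemma kron_pow_mul p q s (A : 'M[R]_(p, q)) (B : 'M[R]_(q, s)) r :
  kron_pow (A *m B) r = kron_pow A r *m kron_pow B r.
Proof.
elim: r => [|r IH] /=; first by rewrite mulmx1.
by rewrite castmx_mulmx tensmx_mul IH.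
Qed.

Lemma trmx_kron_pow p q (A : 'M[R]_(p, q)) r : (kron_pow A r)^T = kron_pow A^T r.
Proof.
elim: r => [|r IH] /=; first by rewrite trmx1.
by rewrite trmx_cast /= trmx_tens IH.
Qed.

Lemma kron_pow1 p r : kron_pow (1%:M : 'M[R]_p) r = 1%:M.
Proof. by elim: r => [|r IH] //=; rewrite IH tensmx11 castmx1. Qed.

Lemma kron_pow_entry p q (i : 'I_p) (j : 'I_q) r :
  exists d e, forall A : 'M[R]_(p, q), kron_pow A r d e = A i j ^+ r.
Proof.
elim: r => [|r [d [e IH]]] /=; first by exists ord0, ord0 => A; rewrite mxE expr0.
exists (cast_ord (esym (expnS p r)) (mxtens_index (i, d))).
exists (cast_ord (esym (expnS q r)) (mxtens_index (j, e))) => A.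
by rewrite castmxE !cast_ordK tensmxE IH exprS.
Qed.

Lemma kron_sumN p (L : 'M[R]_p) r : kron_sum (- L) r = - kron_sum L r.
Proof.
elim: r => [|r IH] /=; first by rewrite oppr0.
by rewrite IH; apply/matrixP => i j; rewrite !(castmxE, mxE); ring.
Qed.

Lemma kron_pow_kron_sum p q (Q : 'M[R]_(p, q)) (L : 'M[R]_q) (L' : 'M[R]_p) r :
  Q *m L = L' *m Q -> kron_pow Q r *m kron_sum L r = kron_sum L' r *m kron_pow Q r.
Proof.
move=> QL; elim: r => [|r IH] /=; first by rewrite mulmx0 mul0mx.
rewrite !castmx_mulmx mulmxDr mulmxDl !tensmx_mul.
by rewrite QL IH !mulmx1 !mul1mx.
Qed.

Definition kron_vpow n (x : 'cV[R]_n) r : 'cV[R]_(n ^ r) :=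
  castmx (erefl, exp1n r) (kron_pow x r).

Lemma kron_pow_mul_vpow p q (A : 'M[R]_(p, q)) (x : 'cV[R]_q) r :
  kron_pow A r *m kron_vpow x r = kron_vpow (A *m x) r.
Proof. by rewrite /kron_vpow kron_pow_mul castmx_mul castmx_id. Qed.

Lemma kron_vpow_entry n (j : 'I_n) r :
  exists d, forall x : 'cV[R]_n, kron_vpow x r d ord0 = x j ord0 ^+ r.
Proof.
have [d [e de]] := kron_pow_entry j (@ord0 0) r.
exists d => x; rewrite castmxE -de; congr (kron_pow x r _ _); apply: val_inj => //=.
by have := ltn_ord e; rewrite [X in (_ < X)%N]exp1n ltnS leqn0 => /eqP.
Qed.

End KroneckerPowers.

Section EntrywiseCalculus.
Variable R : realType.

Lemma is_derive_mul (f g : R -> R) (t df dg : R) :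
  is_derive t 1 f df -> is_derive t 1 g dg ->
  is_derive t 1 (fun u => f u * g u) (f t * dg + g t * df).
Proof. by move=> Hf Hg; have := is_deriveM Hf Hg. Qed.

Lemma is_derive_expRM (c t : R) :
  is_derive t 1 (fun u => expR (c * u)) (c * expR (c * t)).
Proof.
pose f u : R := c * u.
have Hf : is_derive t (1 : R) f c.
  apply: is_derive_eq (is_derive_mul (is_derive_cst c t 1) (is_derive_id t 1)) _.
  by rewrite /= mulr1 mulr0 addr0.
have df : derivable f t 1 by apply: ex_derive.
have de : derivable (@expR R) (f t) 1 by apply: ex_derive.
change (is_derive t 1 (expR \o f) (c * expR (f t))).
apply: DeriveDef.
  by apply/derivable1_diffP; apply: differentiable_comp; apply/derivable1_diffP.
rewrite -derive1E derive1_comp // !derive1E.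
rewrite (@derive_val _ _ _ _ _ _ _ Hf).
by rewrite (@derive_val _ _ _ _ _ _ _ (is_derive_expR (f t))) mulrC.
Qed.

Lemma continuous_sumr (T : topologicalType) (I : Type) (s : seq I) (g : I -> T -> R) :
  (forall i, continuous (g i)) -> continuous (fun w => \sum_(i <- s) g i w).
Proof. by move=> cg; apply: continuous_big => //; exact: add_continuous. Qed.

Definition cmx m n (f : R -> 'M[R]_(m, n)) := forall i j, continuous (fun u => f u i j).

Definition dmx m n (f : R -> 'M[R]_(m, n)) (t : R) (D : 'M[R]_(m, n)) :=
  forall i j, is_derive t 1 (fun u => f u i j) (D i j).

Lemma cmx_lmul m n p (A : 'M[R]_(m, n)) (f : R -> 'M[R]_(n, p)) :
  cmx f -> cmx (fun u => A *m f u).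
Proof.
move=> cf i j; under eq_fun do rewrite mxE.
apply: continuous_sumr => k t.
by apply: (@continuousM R _ (fun=> A i k)); [exact: cst_continuous|exact: cf].
Qed.

Lemma cmx_cast m n m' n' (e : (m = m') * (n = n')) (f : R -> 'M[R]_(m, n)) :
  cmx f -> cmx (fun u => castmx e (f u)).
Proof. by move=> cf i j; under eq_fun do rewrite castmxE; exact: cf. Qed.

Lemma cmx_tens m n p q (f : R -> 'M[R]_(m, n)) (g : R -> 'M[R]_(p, q)) :
  cmx f -> cmx g -> cmx (fun u => f u *t g u).
Proof.
move=> cf cg i j; under eq_fun do rewrite mxE.
by move=> t; apply: continuousM; [exact: cf|exact: cg].
Qed.

Lemma cmx_kron_vpow n (x : R -> 'cV[R]_n) r : cmx x -> cmx (fun u => kron_vpow (x u) r).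
Proof.
move=> cx; apply: cmx_cast; elim: r => [|r IH] /=; first by move=> i j; exact: cst_continuous.
exact/cmx_cast/cmx_tens.
Qed.

Lemma dmx_eq m n (f : R -> 'M[R]_(m, n)) t D D' : dmx f t D -> D = D' -> dmx f t D'.
Proof. by move=> H <-. Qed.

Lemma dmx_cst m n (A : 'M[R]_(m, n)) t : dmx (fun=> A) t 0.
Proof. by move=> i j; rewrite mxE; exact: is_derive_cst. Qed.

Lemma dmx_mulmx m n p (f : R -> 'M[R]_(m, n)) (g : R -> 'M[R]_(n, p)) t D E :
  dmx f t D -> dmx g t E -> dmx (fun u => f u *m g u) t (f t *m E + D *m g t).
Proof.
move=> df dg i j; under eq_fun do rewrite mxE.
rewrite !mxE -big_split /= -fct_sumE; apply: is_derive_sum => k.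
by apply: is_derive_eq (is_derive_mul (df i k) (dg k j)) _; rewrite [g t k j * _]mulrC.
Qed.

Lemma dmx_lmul m n p (A : 'M[R]_(m, n)) (g : R -> 'M[R]_(n, p)) t E :
  dmx g t E -> dmx (fun u => A *m g u) t (A *m E).
Proof.
by move=> dg; apply: dmx_eq (dmx_mulmx (dmx_cst A t) dg) _; rewrite mul0mx addr0.
Qed.

Lemma dmx_tr m n (f : R -> 'M[R]_(m, n)) t D : dmx f t D -> dmx (fun u => (f u)^T) t D^T.
Proof. by move=> df i j; under eq_fun do rewrite mxE; rewrite mxE; exact: df. Qed.

Lemma dmx_cast m n m' n' (e : (m = m') * (n = n')) (f : R -> 'M[R]_(m, n)) t D :
  dmx f t D -> dmx (fun u => castmx e (f u)) t (castmx e D).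
Proof. by move=> df i j; under eq_fun do rewrite castmxE; rewrite castmxE; exact: df. Qed.

Lemma dmx_tens m n p q (f : R -> 'M[R]_(m, n)) (g : R -> 'M[R]_(p, q)) t D E :
  dmx f t D -> dmx g t E -> dmx (fun u => f u *t g u) t (D *t g t + f t *t E).
Proof.
move=> df dg i j; under eq_fun do rewrite mxE.
apply: is_derive_eq (is_derive_mul (df _ _) (dg _ _)) _.
by rewrite !mxE addrC [g t _ _ * _]mulrC.
Qed.

Lemma dmx_kron_vpow n (M : 'M[R]_n) (x : R -> 'cV[R]_n) t r :
  dmx x t (M *m x t) ->
  dmx (fun u => kron_vpow (x u) r) t (kron_sum M r *m kron_vpow (x t) r).
Proof.
move=> dx; rewrite /kron_vpow -[kron_sum M r](castmx_id (erefl, erefl)) -castmx_mul.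
apply: dmx_cast.
elim: r => [|r IH] /=; first by apply: dmx_eq (dmx_cst _ _) _; rewrite mul0mx.
apply: dmx_eq (dmx_cast _ (dmx_tens dx IH)) _.
by rewrite castmx_mulmx mulmxDl !tensmx_mul !mul1mx.
Qed.

End EntrywiseCalculus.

Section SwitchedDecay.
Variable R : realType.

(* Mean value theorem on each piece of [[a, b]] cut at the points of [s]. *)
Lemma ler_derive_nonpos (f df : R -> R) (s : seq R) (a b : R) :
  a <= b -> continuous f ->
  (forall t, a < t -> t < b -> t \notin s -> is_derive t 1 f (df t) /\ df t <= 0) ->
  f b <= f a.
Proof.
elim: s a b => [|p s IH] a b ab cf H.
  case: (ltgtP a b) ab => // [altb _|-> _]; last by [].
  have itv x : x \in `]a, b[ -> a < x /\ x < b by rewrite in_itv /= => /andP.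
  have [c cab] := MVT altb (fun x xab => (H x (itv x xab).1 (itv x xab).2 (negbT (in_nil x))).1)
     (continuous_subspaceT cf).
  move/eqP; rewrite subr_eq => /eqP->.
  rewrite gerDr; apply: mulr_le0_ge0; last by rewrite subr_ge0 ltW.
  exact: (H c (itv c cab).1 (itv c cab).2 (negbT (in_nil c))).2.
have notin_cons t : t \notin s -> t != p -> t \notin p :: s.
  by move=> ts tp; rewrite inE negb_or tp.
have [/andP[ap pb]|np] := boolP ((a < p) && (p < b)).
  apply: (@le_trans _ _ (f p)).
    apply: IH (ltW pb) cf _ => t pt tb ts; apply: H (lt_trans ap pt) tb _.
    by apply: notin_cons => //; rewrite gt_eqF.
  apply: IH (ltW ap) cf _ => t aT tb ts; apply: H aT (lt_trans tb pb) _.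
  by apply: notin_cons => //; rewrite lt_eqF.
apply: IH => // t aT tb ts; apply: (H t aT tb (notin_cons _ ts _)).
by apply: contra np => /eqP tp; rewrite -tp aT tb.
Qed.

Lemma switched_expR_decay m (sigma : R -> 'I_m) (f df : R -> R) (c : R) :
  switching_signal sigma -> continuous f ->
  (forall t, 0 < t -> locally_const_at sigma t ->
     is_derive t 1 f (df t) /\ df t <= - c * f t) ->
  forall t, 0 <= t -> expR (c * t) * f t <= f 0.
Proof.
move=> sw cf H T T0; have [s Hs] := sw T.
have expc : continuous (fun u => expR (c * u)).
  move=> u; apply: (@continuous_comp _ _ _ (fun u => c * u) expR); last exact: continuous_expR.
  by apply: (@continuousM R _ (cst c) id); [exact: cst_continuous|].
have := @ler_derive_nonpos (fun u => expR (c * u) * f u)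
  (fun u => expR (c * u) * df u + f u * (c * expR (c * u))) s 0 T T0.
rewrite mulr0 expR0 mul1r; apply => [u|t t0 tT ts].
  by apply: (@continuousM R _ (fun u => expR (c * u)) f); [exact: expc|exact: cf].
have lc : locally_const_at sigma t by apply: Hs => //; rewrite (ltW t0) (ltW tT).
have [dft dfle] := H t t0 lc.
split; first exact: is_derive_mul (is_derive_expRM c t) dft.
have := expR_gt0 (c * t); nra.
Qed.

Lemma switched_const m (sigma : R -> 'I_m) (f : R -> R) :
  switching_signal sigma -> continuous f ->
  (forall t, 0 < t -> locally_const_at sigma t -> is_derive t 1 f 0) ->
  forall t, 0 <= t -> f t = f 0.
Proof.
move=> sw cf df0.
have nonincr (g : R -> R) : continuous g -> (forall t, 0 < t -> locally_const_at sigma t ->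
    is_derive t 1 g 0) -> forall t, 0 <= t -> g t <= g 0.
  move=> cg dg0 t t0; have := @switched_expR_decay _ sigma g (fun=> 0) 0 sw cg _ t t0.
  by rewrite mul0r expR0 mul1r; apply => u u0 lc; split; [exact: dg0|rewrite oppr0 mul0r].
move=> t t0; apply/eqP; rewrite eq_le nonincr //= -lerN2.
apply: (nonincr (fun u => - f u)) => // [u|u u0 lc].
  exact/continuousN/cf.
by rewrite -oppr0; apply/is_deriveN/df0.
Qed.

End SwitchedDecay.

Section QuadraticForms.
Variable R : realType.
Local Open Scope classical_set_scope.

Definition qform N (S : 'M[R]_N) (v : 'cV[R]_N) : R := (v^T *m S *m v) ord0 ord0.

Definition mx_abs_sum m n (S : 'M[R]_(m, n)) : R := \sum_i \sum_j `|S i j|.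

Lemma mx_abs_sum_ge0 m n (S : 'M[R]_(m, n)) : 0 <= mx_abs_sum S.
Proof. by apply: sumr_ge0 => i _; apply: sumr_ge0. Qed.

Lemma entry_le_norm m n (x : 'M[R]_(m, n)) i j : `|x i j| <= `|x|.
Proof.
rewrite -[`|x|]/(mx_norm x) mx_normrE.
by rewrite (bigD1 (i, j)) //= le_max lexx.
Qed.

Lemma qform_sum N (S : 'M[R]_N) v :
  qform S v = \sum_i \sum_j v i ord0 * S i j * v j ord0.
Proof.
rewrite /qform mxE exchange_big; apply: eq_bigr => j _; rewrite mxE mulr_suml.
by apply: eq_bigr => i _; rewrite !mxE.
Qed.

Lemma qformZ N (S : 'M[R]_N) k v : qform S (k *: v) = k ^+ 2 * qform S v.
Proof.
rewrite /qform; have -> : (k *: v)^T = k *: v^T by apply/matrixP => i j; rewrite !mxE.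
by rewrite -!scalemxAl -scalemxAr !mxE expr2 mulrA.
Qed.

Lemma qformN N (S : 'M[R]_N) v : qform (- S) v = - qform S v.
Proof. by rewrite /qform mulmxN mulNmx mxE. Qed.

Lemma continuous_qform_comp (T : topologicalType) N (S : 'M[R]_N) (f : T -> 'cV[R]_N) :
  (forall i, continuous (fun t => f t i ord0)) -> continuous (fun t => qform S (f t)).
Proof.
move=> cf; under eq_fun do rewrite qform_sum.
apply: continuous_sumr => i; apply: continuous_sumr => j t.
apply: (@continuousM R _ (fun t => f t i ord0 * S i j)); last exact: cf.
by apply: (@continuousM R _ (fun t => f t i ord0)); [exact: cf|exact: cst_continuous].
Qed.

Lemma qform_le_norm N (S : 'M[R]_N) v : qform S v <= mx_abs_sum S * `|v| ^+ 2.
Proof.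
rewrite qform_sum /mx_abs_sum !mulr_suml; apply: ler_sum => i _.
rewrite mulr_suml; apply: ler_sum => j _.
apply: le_trans (ler_norm _) _; rewrite !normrM mulrAC mulrC ler_wpM2l //.
by rewrite expr2 ler_pM ?entry_le_norm.
Qed.

Lemma mulmx_entry_le m n (S : 'M[R]_(m, n)) (v : 'cV[R]_n) i :
  `|(S *m v) i ord0| <= mx_abs_sum S * `|v|.
Proof.
rewrite mxE; apply: le_trans (ler_norm_sum _ _ _) _.
apply: (@le_trans _ _ (\sum_j `|S i j| * `|v|)).
  by apply: ler_sum => j _; rewrite normrM ler_wpM2l // entry_le_norm.
rewrite -mulr_suml ler_wpM2r // /mx_abs_sum (bigD1 i) //= lerDl.
by apply: sumr_ge0 => i' _; apply: sumr_ge0.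
Qed.

Lemma trmx_norm m n (A : 'M[R]_(m, n)) : `|A^T| = `|A|.
Proof.
have le m' n' (B : 'M[R]_(m', n')) : `|B^T| <= `|B|.
  rewrite -[`|B^T|]/(mx_norm _) mx_normrE.
  by apply: bigmax_le => [|[i j] _]; rewrite ?normr_ge0 // mxE entry_le_norm.
by apply/le_anti; rewrite le -{1}(trmxK A) le.
Qed.

(* [l] is the minimum of [qform S] on the unit sphere, which is compact. *)
Lemma qform_coercive N (S : 'M[R]_N) :
  (forall v, v != 0 -> 0 < qform S v) ->
  exists2 l, 0 < l & forall v, l * `|v| ^+ 2 <= qform S v.
Proof.
move=> pos.
have qf0 : qform S 0 = 0 by rewrite -(scale0r (0 : 'cV[R]_N)) qformZ expr2 !mul0r.
pose A := [set w : 'rV[R]_N | `|w| = 1].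
have unitA v : v != 0 -> A (`|v|^-1 *: v^T).
  by move=> v0; rewrite /A /= normrZ normfV normr_id trmx_norm mulVf // normr_eq0.
have [[c Ac]|A0] := pselect (A !=set0); last first. (* only when [N = 0] *)
  exists 1 => // v; have [->|v0] := eqVneq v 0; first by rewrite qf0 normr0 expr0n mulr0.
  by exfalso; apply: A0; exists (`|v|^-1 *: v^T); apply: unitA.
have cA : compact A.
  apply: bounded_closed_compact.
    exists 1; split; first by rewrite num_real.
    by move=> M M1 w; rewrite /A /= => ->; apply: ltW.
  apply: (@preimage_closed _ _ (fun w : 'rV[R]_N => `|w|) [set 1]).
    by move=> w _; apply: norm_continuous.
  exact: closed_eq.
have cqf : continuous (fun w : 'rV[R]_N => qform S w^T).
  apply: continuous_qform_comp => i; under eq_fun do rewrite mxE.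
  exact: coord_continuous.
have [c' /set_mem Ac' cmin] := compact_EVT_min (ex_intro _ c Ac) cA (continuous_subspaceT cqf).
have c'0 : c'^T != 0.
  apply/eqP => c'0; move: Ac'; rewrite /A /= -trmx_norm c'0 normr0 => /eqP.
  by rewrite eq_sym oner_eq0.
exists (qform S c'^T); first exact: pos.
move=> v; have [->|v0] := eqVneq v 0; first by rewrite qf0 normr0 expr0n mulr0.
have := cmin _ (mem_set (unitA v v0)); rewrite linearZ /= trmxK qformZ exprVn.
have vp : 0 < `|v| ^+ 2 by rewrite exprn_gt0 // normr_gt0.
by rewrite ler_pdivlMl // mulrC.
Qed.

Lemma qform_coercive_uniform m N (S : 'I_m -> 'M[R]_N) :
  (forall k v, v != 0 -> 0 < qform (S k) v) ->
  exists2 l, 0 < l & forall k v, l * `|v| ^+ 2 <= qform (S k) v.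
Proof.
move=> pos; have [lf lf0 lfS] := fin_all_exists2 (fun k => qform_coercive (pos k)).
exists (\big[Num.min/1]_k lf k).
  by elim/big_ind: _ => // a b a0 b0; rewrite lt_min a0 b0.
move=> k v; apply: le_trans (lfS k v); rewrite ler_wpM2r ?exprn_ge0 //.
by rewrite (bigD1 k) //= ge_min lexx.
Qed.

Lemma posdef_unitmx N (P : 'M[R]_N) : posdef P -> P \in unitmx.
Proof.
move=> [_ Ppos]; rewrite unitmxE unitfE; apply/negP => /det0P [v v0 vP].
by have := Ppos v^T; rewrite trmx_eq0 trmxK vP mul0mx mxE ltxx => /(_ v0).
Qed.

Lemma posdef_congruence m N (Q : 'M[R]_(m, N)) (P : 'M[R]_N) :
  Q *m Q^T = 1%:M -> posdef P -> posdef (Q *m P *m Q^T).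
Proof.
move=> QQ [PT Ppos]; split; first by rewrite !trmx_mul trmxK PT mulmxA.
move=> v v0; have Qv0 : Q^T *m v != 0.
  by apply: contraNneq v0 => Qv; rewrite -(mul1mx v) -QQ -mulmxA Qv mulmx0.
by have := Ppos _ Qv0; rewrite trmx_mul trmxK !mulmxA.
Qed.

Lemma negdef_posdefN N (S : 'M[R]_N) : negdef (- S) -> posdef S.
Proof.
move=> [ST Sneg]; split; first by apply: oppr_inj; rewrite -ST linearN.
by move=> v /Sneg; rewrite -/(qform _ _) qformN oppr_lt0.
Qed.

End QuadraticForms.

Section Lyapunov.
Variable R : realType.
Local Open Scope classical_set_scope.

Lemma qform_invmx N (P : 'M[R]_N) v :
  posdef P -> qform (invmx P) v = qform P (invmx P *m v).
Proof.
move=> Ppd; have [PT _] := Ppd; have Pu := posdef_unitmx Ppd.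
rewrite /qform trmx_mul trmx_inv PT -!mulmxA [P *m (_ *m v)]mulmxA mulmxV //.
by rewrite mul1mx.
Qed.

Lemma is_derive_qform_invmx N (P L : 'M[R]_N) (y : R -> 'cV[R]_N) t :
  posdef P -> dmx y t (- L *m y t) ->
  is_derive t 1 (fun u => qform (invmx P) (y u))
    (- qform (L *m P + P *m L^T) (invmx P *m y t)).
Proof.
move=> Ppd dy; have [PT _] := Ppd; have Pu := posdef_unitmx Ppd.
have := dmx_mulmx (dmx_tr dy) (dmx_lmul (invmx P) dy) ord0 ord0.
move=> dV; rewrite /qform; under eq_fun do rewrite -mulmxA.
apply: is_derive_eq dV _.
have [w ->] : exists w, y t = P *m w.
  by exists (invmx P *m y t); rewrite mulmxA mulmxV ?mul1mx.
rewrite [invmx P *m (P *m w)]mulmxA mulVmx // mul1mx.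
suff -> : (P *m w)^T *m (invmx P *m (- L *m (P *m w))) + (- L *m (P *m w))^T *m w =
    - (w^T *m (L *m P + P *m L^T) *m w) by rewrite mxE.
rewrite !mulNmx !mulmxN linearN /= !trmx_mul PT !mulmxA.
by rewrite -[w^T *m P *m invmx P]mulmxA mulmxV // mulmx1 mulmxDr mulmxDl opprD !mulmxA mulNmx.
Qed.

Lemma cvg0_pow (T : Type) (F : set_system T) {FF : Filter F} (z : T -> R) p :
  (0 < p)%N -> (fun t => z t ^+ p) @ F --> 0 -> z @ F --> 0.
Proof.
move=> p0 /cvgr0Pnorm_lt zp; apply/cvgr0Pnorm_lt => e e0.
apply: filterS (zp _ (exprn_gt0 p e0)) => t.
by rewrite normrX ltr_pXn2r // nnegrE ?normr_ge0 ?ltW.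
Qed.

Lemma cvg0_le_inv_linear (z : R -> R) (C c : R) :
  0 < c -> (forall t, 0 <= t -> `|z t| <= C / (1 + c * t)) -> z @ +oo --> 0.
Proof.
move=> c0 zb; apply/cvgr0Pnorm_le => e e0.
exists (Num.max 0 (C / (c * e))); split; first by rewrite num_real.
move=> t /=; rewrite gt_max => /andP[t0 tC]; apply: le_trans (zb t (ltW t0)) _.
have ct : 0 < 1 + c * t by rewrite ltr_wpDr // mulr_ge0 // ltW.
rewrite ler_pdivrMr //; move: tC; rewrite ltr_pdivrMr ?mulr_gt0 // => tC.
nra.
Qed.

Section SwitchedLyapunov.
Variables (N m : nat) (L : 'I_m -> 'M[R]_N) (P : 'M[R]_N) (sigma : R -> 'I_m).
Variable y : R -> 'cV[R]_N.
Hypothesis Ppd : posdef P.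
Hypothesis LPpd : forall k, posdef (L k *m P + P *m (L k)^T).
Hypothesis sw : switching_signal sigma.
Hypothesis cy : cmx y.
Hypothesis dy :
  forall t, 0 < t -> locally_const_at sigma t -> dmx y t (- L (sigma t) *m y t).

(* [V' = - qform (L P + P L^T) (P^-1 y) <= - l |P^-1 y|^2 <= - (l / K) V]. *)
Lemma switched_lyapunov_decay : exists2 c, 0 < c & forall t, 0 <= t ->
  (1 + c * t) * qform (invmx P) (y t) <= qform (invmx P) (y 0).
Proof.
pose V t := qform (invmx P) (y t).
have [l l0 lS] := qform_coercive_uniform (fun k => (LPpd k).2).
have [lP lP0 lPV] := qform_coercive Ppd.2.
pose K := 1 + mx_abs_sum P.
have K0 : 0 < K by rewrite ltr_pwDl ?mx_abs_sum_ge0.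
have VK t : V t <= K * `|invmx P *m y t| ^+ 2.
  rewrite /V qform_invmx //; apply: le_trans (qform_le_norm _ _) _.
  by rewrite ler_wpM2r ?exprn_ge0 // lerDr.
have V_ge0 t : 0 <= V t.
  rewrite /V qform_invmx //; apply: le_trans (lPV _).
  by rewrite mulr_ge0 ?exprn_ge0 // ltW.
exists (l / K) => [|t t0]; first by rewrite divr_gt0.
apply: le_trans (_ : expR (l / K * t) * V t <= V 0).
  by apply: ler_wpM2r; [exact: V_ge0|exact: expR_ge1Dx].
apply: (switched_expR_decay (f := V) (df := fun t =>
  - qform (L (sigma t) *m P + P *m (L (sigma t))^T) (invmx P *m y t)) sw _ _ t0).
  by apply: continuous_qform_comp => j; exact: cy.
move=> u u0 lc; split; first exact: is_derive_qform_invmx (dy u0 lc).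
have := lS (sigma u) (invmx P *m y u); have := VK u.
rewrite mulNr lerN2 mulrAC ler_pdivrMr //; nra.
Qed.

(* [y = P (P^-1 y)] and [lP |P^-1 y|^2 <= V], where [lP] bounds [qform P]. *)
Lemma switched_cvg0 i : (fun t => y t i ord0) @ +oo --> 0.
Proof.
have [c c0 decay] := switched_lyapunov_decay.
have [lP lP0 lPV] := qform_coercive Ppd.2.
pose A := mx_abs_sum P ^+ 2.
have A0 : 0 <= A by rewrite exprn_ge0 ?mx_abs_sum_ge0.
apply: (cvg0_pow (p := 2)) => //.
apply: (cvg0_le_inv_linear (C := A * qform (invmx P) (y 0) / lP) c0) => t t0.
set w := invmx P *m y t.
have yw : `|y t i ord0| ^+ 2 <= A * `|w| ^+ 2.
  have -> : y t = P *m w by rewrite mulmxA mulmxV ?mul1mx ?posdef_unitmx.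
  by rewrite -exprMn lerXn2r ?nnegrE ?mulr_ge0 ?mx_abs_sum_ge0 ?mulmx_entry_le.
have wV := lPV w; rewrite -qform_invmx // in wV.
have ct : 0 < 1 + c * t by rewrite ltr_wpDr // mulr_ge0 // ltW.
rewrite normrX ler_pdivlMr // ler_pdivlMr //.
apply: le_trans (_ : A * ((1 + c * t) * qform (invmx P) (y t)) <= _); last first.
  by rewrite ler_wpM2l ?decay.
apply: (@le_trans _ _ (A * `|w| ^+ 2 * ((1 + c * t) * lP))).
  by rewrite -mulrA ler_wpM2r // mulr_ge0 // ltW.
by rewrite -mulrA ler_wpM2l // mulrC -mulrA ler_wpM2l // ltW.
Qed.

End SwitchedLyapunov.

End Lyapunov.

Lemma mxtrace_gram_eq0 (R : realDomainType) m n (A : 'M[R]_(m, n)) :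
  \tr (A^T *m A) = 0 -> A = 0.
Proof.
have -> : \tr (A^T *m A) = \sum_j \sum_i A i j ^+ 2.
  by apply: eq_bigr => j _; rewrite mxE; apply: eq_bigr => i _; rewrite mxE expr2.
move/eqP; rewrite psumr_eq0 => [/allP A0|j _]; last by apply: sumr_ge0 => i _; exact: sqr_ge0.
apply/matrixP => i j; rewrite mxE; move: (A0 j (mem_index_enum _)).
rewrite implyTb psumr_eq0 => [/allP/(_ i (mem_index_enum _))|k _]; last exact: sqr_ge0.
by rewrite implyTb sqrf_eq0 => /eqP.
Qed.

Section Consensus.
Variable R : realType.
Local Open Scope classical_set_scope.

Lemma signed_laplacian_ones n (A : 'M[R]_n) : signed_laplacian A *m ones R n = 0.
Proof.
apply/matrixP => i j; rewrite !mxE.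
under eq_bigr do rewrite !mxE mulr1.
rewrite sumrB [X in X - _](bigD1 i) //= eqxx mulr1n [X in _ + X - _]big1 ?addr0 ?subrr //.
by move=> k ki; rewrite eq_sym (negbTE ki) mulr0n.
Qed.

Lemma trmx_ones_mul_ones n : (ones R n)^T *m ones R n = n%:R%:M.
Proof.
apply/matrixP => i j; rewrite !mxE (ord1 i) (ord1 j) eqxx mulr1n.
under eq_bigr do rewrite !mxE mulr1.
by rewrite sumr_const card_ord.
Qed.

(* [E = 1 - Q^T Q - 1 1^T / n] is a symmetric idempotent (it is annihilated
   by [Q] and [1^T]) of trace [n - (n - 1) - 1 = 0]. *)
Lemma orth_ones_resolution n (Q : 'M[R]_(n.-1, n)) :
  (0 < n)%N -> Q *m Q^T = 1%:M -> Q *m ones R n = 0 ->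
  Q^T *m Q + n%:R^-1 *: (ones R n *m (ones R n)^T) = 1%:M.
Proof.
move=> n0 QQ Q1.
have nz : n%:R != 0 :> R by rewrite pnatr_eq0 -lt0n.
set J := n%:R^-1 *: _; set E := 1%:M - (Q^T *m Q + J).
suff /eqP : E = 0 by rewrite subr_eq0 => /eqP <-.
have QJ : Q *m J = 0 by rewrite /J -scalemxAr mulmxA Q1 mul0mx scaler0.
have QE : Q *m E = 0.
  by rewrite mulmxBr mulmxDr QJ addr0 mulmx1 mulmxA QQ mul1mx subrr.
have oE : (ones R n)^T *m E = 0.
  rewrite mulmxBr mulmxDr mulmxA -trmx_mul Q1 trmx0 mul0mx add0r mulmx1.
  by rewrite /J -scalemxAr mulmxA trmx_ones_mul_ones mul_scalar_mx scalerA mulVf ?scale1r ?subrr.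
have ET : E^T = E.
  by rewrite /E linearB linearD /= trmx1 trmx_mul trmxK /J linearZ /= trmx_mul trmxK.
apply: mxtrace_gram_eq0; rewrite ET.
have -> : E *m E = E.
  rewrite {1}/E mulmxBl mul1mx mulmxDl -mulmxA QE mulmx0 add0r.
  by rewrite /J -scalemxAl -mulmxA oE mulmx0 scaler0 subr0.
have n1 : (n.-1)%:R + 1 = n%:R :> R by rewrite natr1 prednK.
rewrite /E raddfB /= mxtraceD mxtrace1 mxtrace_mulC QQ mxtrace1.
by rewrite /J mxtraceZ mxtrace_mulC trmx_ones_mul_ones mxtrace_scalar mulr1n mulVf // n1 subrr.
Qed.

Lemma orth_mulmx_reduce n (Q : 'M[R]_(n.-1, n)) (L : 'M[R]_n) :
  (0 < n)%N -> Q *m Q^T = 1%:M -> Q *m ones R n = 0 -> L *m ones R n = 0 ->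
  Q *m L = (Q *m L *m Q^T) *m Q.
Proof.
move=> n0 QQ Q1 L1; rewrite -[LHS]mulmx1 -(orth_ones_resolution n0 QQ Q1).
by rewrite mulmxDr -scalemxAr !mulmxA -(mulmxA Q L (ones R n)) L1 mulmx0 mul0mx scaler0 addr0.
Qed.

Lemma posdef_reduced_lmi N M (Q : 'M[R]_(M, N)) (L : 'M[R]_N) (L' : 'M[R]_M)
    (P : 'M[R]_N) :
  Q *m L = L' *m Q ->
  negdef (- (Q *m L *m P *m Q^T) - Q *m P *m L^T *m Q^T) ->
  posdef (L' *m (Q *m P *m Q^T) + (Q *m P *m Q^T) *m L'^T).
Proof.
move=> QL lmi; apply: negdef_posdefN; rewrite opprD.
have -> : L' *m (Q *m P *m Q^T) = Q *m L *m P *m Q^T by rewrite !mulmxA QL.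
suff -> : Q *m P *m Q^T *m L'^T = Q *m P *m L^T *m Q^T by [].
by rewrite -!mulmxA -trmx_mul -QL trmx_mul.
Qed.

Lemma switched_solutionP n m (L : 'I_m -> 'M[R]_n) sigma (x : R -> 'cV[R]_n) :
  switched_solution L sigma x ->
  cmx x /\ forall t, 0 < t -> locally_const_at sigma t -> dmx x t (- L (sigma t) *m x t).
Proof.
by move=> [cx dx]; split => [i j|t t0 lc i j]; rewrite (ord1 j); [exact: cx|exact: dx].
Qed.

Lemma switched_mean_const n m (L : 'I_m -> 'M[R]_n) sigma (x : R -> 'cV[R]_n) :
  (forall k, weight_balanced (L k)) -> switching_signal sigma ->
  switched_solution L sigma x ->
  forall t, 0 <= t -> ((ones R n)^T *m x t) ord0 ord0 = ((ones R n)^T *m x 0) ord0 ord0.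
Proof.
move=> wb sw /switched_solutionP [cx dx].
apply: (switched_const sw).
  by have := cmx_lmul (A := (ones R n)^T) cx; apply.
move=> t t0 lc; apply: is_derive_eq (dmx_lmul _ (dx t t0 lc) ord0 ord0) _.
by rewrite mulNmx mulmxN mulmxA -[L _]trmxK -trmx_mul wb trmx0 mul0mx oppr0 mxE.
Qed.

Lemma cvg_consensus n (Q : 'M[R]_(n.-1, n)) (x : R -> 'cV[R]_n) (a : R) :
  (0 < n)%N -> Q *m Q^T = 1%:M -> Q *m ones R n = 0 ->
  (forall t, 0 <= t -> ((ones R n)^T *m x t) ord0 ord0 = a) ->
  (forall j, (fun t => (Q *m x t) j ord0) @ +oo --> 0) ->
  forall i, (fun t => x t i ord0) @ +oo --> (n%:R^-1 * a *: ones R n) i ord0.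
Proof.
move=> n0 QQ Q1 xa Qx i.
have xE t : 0 <= t -> \sum_j Q j i * (Q *m x t) j ord0 + n%:R^-1 * a = x t i ord0.
  move=> t0; have := congr1 (fun M => (M *m x t) i ord0) (orth_ones_resolution n0 QQ Q1).
  rewrite /= mul1mx mulmxDl mxE -scalemxAl [X in _ + X]mxE -[ones R n *m _ *m x t]mulmxA.
  rewrite [(ones R n *m _) i ord0]mxE big_ord1 [ones R n i ord0]mxE mul1r xa //.
  rewrite -[Q^T *m Q *m x t]mulmxA => <-.
  by congr (_ + _); rewrite [RHS]mxE; apply: eq_bigr => j _; rewrite [Q^T _ _]mxE.
rewrite !mxE mulr1; apply: cvg_trans (near_eq_cvg _) _.
  by near=> t; apply: xE; near: t; apply: nbhs_pinfty_ge; rewrite num_real.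
have Qx0 : (fun t => \sum_j Q j i * (Q *m x t) j ord0) @ +oo --> \sum_j Q j i * 0.
  by apply: (cvg_big add_continuous) => // j _; apply: (cvgM (cvg_cst _) (Qx j)).
have sum0 : \sum_(j < n.-1) Q j i * 0 = 0 by rewrite big1 // => j _; rewrite mulr0.
by have := cvgD Qx0 (cvg_cst (n%:R^-1 * a)); rewrite sum0 add0r; apply.
Unshelve. all: by end_near.
Qed.

End Consensus.

Theorem corollary6 (R : realType) (n m r : nat) (A : 'I_m -> 'M[R]_n)
  (Q : 'M[R]_(n.-1, n)) (P : 'M[R]_(n ^ r)) :
  (0 < r)%N ->
  (forall k, weight_balanced (signed_laplacian (A k))) ->
  (forall k, EEP (- signed_laplacian (A k))) ->
  Q *m Q^T = 1%:M ->
  Q *m ones R n = 0 ->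
  posdef P ->
  (forall k,
     let Lh := kron_sum (signed_laplacian (A k)) r in
     let Qh := kron_pow Q r in
     negdef (- (Qh *m Lh *m P *m Qh^T) - Qh *m P *m Lh^T *m Qh^T)) ->
  consensus_set (fun k => signed_laplacian (A k)).
Proof.
move=> r_gt0 wb _ QQ Q1 Ppd lmi sigma sw x xsol.
have [n0|n_gt0] := posnP n.
  by exists 0 => i; have := ltn_ord i; rewrite [X in (_ < X)%N]n0.
pose L k := signed_laplacian (A k); pose Lr k := Q *m L k *m Q^T; pose Qh := kron_pow Q r.
have QhL k : Qh *m kron_sum (L k) r = kron_sum (Lr k) r *m Qh.
  by apply/kron_pow_kron_sum/orth_mulmx_reduce => //; exact: signed_laplacian_ones.
have [cx dx] := switched_solutionP xsol.
have y_cvg := @switched_cvg0 _ _ _ (fun k => kron_sum (Lr k) r) (Qh *m P *m Qh^T) sigma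
  (fun t => Qh *m kron_vpow (x t) r).
have u_cvg j : ((fun t => (Q *m x t) j ord0) @ +oo --> 0)%classic.
  have [d xd] := kron_vpow_entry R j r.
  apply: (cvg0_pow r_gt0); under eq_fun do rewrite -xd -kron_pow_mul_vpow.
  apply: y_cvg => // [|k||t t0 lc].
  - by apply: posdef_congruence Ppd; rewrite trmx_kron_pow -kron_pow_mul QQ kron_pow1.
  - exact: posdef_reduced_lmi (QhL k) (lmi k).
  - exact/cmx_lmul/cmx_kron_vpow.
  - apply: dmx_eq (dmx_lmul _ (dmx_kron_vpow (r := r) (dx t t0 lc))) _.
    by rewrite kron_sumN !mulNmx mulmxN !mulmxA QhL.
by eexists; apply: (cvg_consensus n_gt0 QQ Q1 (switched_mean_const wb sw xsol) u_cvg).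
Qed.
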